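(* Let $R=R_1\times R_2$ be a direct product of two finite commutative local rings with identity, and let $I=I_1\times I_2$ where $I_1$ is a proper ideal of $R_1$ and $I_2$ is a proper ideal of $R_2$. If the vertex set of $\Gamma''_{I_1}(R_1)$ or the vertex set of $\Gamma''_{I_2}(R_2)$ has more than one element, then $\Gamma''_I(R)$ is not planar.
   Context: The product has componentwise operations. For a commutative ring $S$ and an ideal $J$ of $S$, $\Gamma''_J(S)$ is the simple undirected graph whose vertex set is $\{x\in S\setminus J : xS+J\neq S\}$, with distinct vertices $x,y$ adjacent if and only if $x\notin yS+J$ and $y\notin xS+J$. A graph is planar if it can be drawn in the plane with edges meeting only at their endpoints. *)

From HB Require Import structures.
From mathcomp Require Import all_boot all_order all_algebra.
From mathcomp Require Import Rstruct.
From Stdlib Require Import Rdefinitions.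
Notation R := Rdefinitions.R.
Set Implicit Arguments. Unset Strict Implicit. Unset Printing Implicit Defensive.
Import Order.TTheory GRing.Theory Num.Theory.
Local Open Scope ring_scope.

Definition is_ideal (S : finComNzRingType) (J : {set S}) : Prop :=
  0 \in J /\ (forall x y, x \in J -> y \in J -> x - y \in J) /\
  (forall s x, x \in J -> s * x \in J).

Definition proper_ideal_of (S : finComNzRingType) (J : {set S}) : Prop :=
  is_ideal J /\ J != [set: S].

(* S is a local ring: its non-units form an ideal (equivalently S has a
   unique maximal ideal); S is nonzero since it is an NzRing. *)
Definition local_ring (S : finComNzRingType) : Prop :=
  is_ideal [set x : S | ~~ [exists y : S, x * y == 1]].

Definition xSJ (S : finComNzRingType) (J : {set S}) (x : S) : {set S} :=
  [set y | [exists s : S, [exists j in J, y == x * s + j]]].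

Definition G2_vertices (S : finComNzRingType) (J : {set S}) : {set S} :=
  [set x | (x \notin J) && (xSJ J x != [set: S])].

Definition G2_adj (S : finComNzRingType) (J : {set S}) (x y : S) : bool :=
  [&& x \in G2_vertices J, y \in G2_vertices J, x != y,
      x \notin xSJ J y & y \notin xSJ J x].

Definition point := (R * R)%type.

Definition in01 (t : R) : Prop := 0 <= t <= 1.

Definition path_cont (g : R -> point) : Prop :=
  forall t, in01 t -> forall eps : R, 0 < eps -> exists2 d : R, 0 < d &
    forall s, in01 s -> `|s - t| < d ->
      `|(g s).1 - (g t).1| < eps /\ `|(g s).2 - (g t).2| < eps.

(* Arcs are given for ordered
   pairs; arc u v and arc v u both draw the edge {u,v}. *)
Definition planar (T : finType) (V : {set T}) (e : rel T) : Prop :=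
  exists (f : T -> point) (arc : T -> T -> R -> point),
    {in V &, injective f} /\
    (forall u v, e u v ->
       [/\ path_cont (arc u v), arc u v 0 = f u, arc u v 1 = f v,
           (forall s t, in01 s -> in01 t -> arc u v s = arc u v t -> s = t)
         & forall w t, w \in V -> in01 t -> arc u v t = f w ->
             (w = u /\ t = 0) \/ (w = v /\ t = 1)]) /\
    (forall u v u' v', e u v -> e u' v' ->
       ~ ((u = u' /\ v = v') \/ (u = v' /\ v = u')) ->
       forall s t, in01 s -> in01 t -> arc u v s = arc u' v' t ->
         exists2 w, (w = u \/ w = v) /\ (w = u' \/ w = v') & arc u v s = f w).

(* Equip the product of two finite commutative rings with its (componentwise)
   finite commutative ring structure. *)
HB.saturate prod.

From Stdlib Require Import Reals Lra Lia IndefiniteDescription.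
From HB Require Import structures.
From mathcomp Require Import all_boot all_order all_algebra zify.
From mathcomp Require Import Rstruct.
Set Implicit Arguments. Unset Strict Implicit. Unset Printing Implicit Defensive.
Import GRing.Theory.

(* [Gamma''_I(R)] contains [K_{3,3}]: if [x_0], [x_1], [x_2] are distinct nonunits of [R_1]
   (such as [0] and two vertices of [Gamma''_I1(R_1)]), every [(x_i, 1)] is adjacent to
   every [(1 + x_j, 0)] because [1 + x_j] is a unit of the local ring [R_1]; symmetrically
   for [R_2].

   [K_{3,3}] is not planar, by a parity argument of van Kampen type.  For disjoint arcs [e]
   and [f], the vectors [e s - f t] at neighbouring points of a fine grid of parameters
   make small angles, which sum to zero around each cell and hence around the boundary of
   the grid: the winding of [e] seen from [f 1] minus that seen from [f 0] equals the same
   quantity with [e] and [f] exchanged.  Writing each winding as the difference of the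
   directions of its endpoints plus a whole number of turns yields an integer relation
   for every pair of disjoint edges of [K_{3,3}].  In the sum of 18 of these relations
   every unknown number of turns occurs an even number of times, while the half turns
   between the three endpoints [b_j] add up to an odd number. *)

Section PlaneAngles.
Local Open Scope R_scope.

Definition dot (x y : point) := x.1 * y.1 + x.2 * y.2.
Definition cross (x y : point) := x.1 * y.2 - x.2 * y.1.
Definition vsub (x y : point) : point := (x.1 - y.1, x.2 - y.2).
Definition vopp (x : point) : point := (- x.1, - x.2).

(* [t] measures the oriented angle from [x] to [y], up to a multiple of [2 * PI]. *)
Definition is_angle (t : R) (x y : point) :=
  exists2 l, 0 < l & cos t = l * dot x y /\ sin t = l * cross x y.

Definition multiple_2PI (x : R) := exists k : Z, x = 2 * PI * IZR k.

Definition small_angle (x y : point) := atan (cross x y / dot x y).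

Lemma sqr_norm_gt0 (x : point) : x <> (0, 0) -> 0 < x.1 * x.1 + x.2 * x.2.
Proof.
case: x => a b /= Hx.
have [a0|] := Req_dec a 0; last by nra.
have [b0|] := Req_dec b 0; last by nra.
by case: Hx; rewrite a0 b0.
Qed.

Lemma dot_cross_sqr (x y : point) :
  dot x y * dot x y + cross x y * cross x y =
  (x.1 * x.1 + x.2 * x.2) * (y.1 * y.1 + y.2 * y.2).
Proof. rewrite /dot /cross; ring. Qed.

Lemma dot_gt0_neq0 (x y : point) : 0 < dot x y -> x <> (0, 0) /\ y <> (0, 0).
Proof. by move=> dxy; split=> E; move: dxy; rewrite /dot E /=; lra. Qed.

Lemma cos_eq1_multiple_2PI t : cos t = 1 -> multiple_2PI t.
Proof.
move=> ct.
have : sin (t / 2) = 0.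
  have := cos_2a_sin (t / 2); rewrite (_ : 2 * (t / 2) = t); last by field.
  by rewrite ct => E; apply: Rsqr_0_uniq; rewrite /Rsqr; lra.
by case/sin_eq_0_0=> k tk; exists k; lra.
Qed.

Lemma is_angle_small x y : 0 < dot x y -> is_angle (small_angle x y) x y.
Proof.
move=> dxy; rewrite /small_angle; set u := cross x y / dot x y.
have su : 0 < sqrt (1 + u²) by apply: sqrt_lt_R0; have := Rle_0_sqr u; lra.
have cu : u * dot x y = cross x y by rewrite /u; field; lra.
exists (1 / (dot x y * sqrt (1 + u²))).
  by apply: Rdiv_lt_0_compat; [lra | apply: Rmult_lt_0_compat].
by rewrite cos_atan sin_atan -cu; split; field; lra.
Qed.

Lemma is_angle0 x : x <> (0, 0) -> is_angle 0 x x.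
Proof.
move/sqr_norm_gt0=> nx; exists (1 / (x.1 * x.1 + x.2 * x.2)).
  by apply: Rdiv_lt_0_compat; lra.
by rewrite cos_0 sin_0 /dot /cross; split; field; lra.
Qed.

Lemma is_angleD a b x y z :
  y <> (0, 0) -> is_angle a x y -> is_angle b y z -> is_angle (a + b) x z.
Proof.
move/sqr_norm_gt0=> ny [l l0 [ca sa]] [m m0 [cb sb]].
exists (l * m * (y.1 * y.1 + y.2 * y.2)).
  by apply: Rmult_lt_0_compat; first exact: Rmult_lt_0_compat.
by rewrite cos_plus sin_plus ca sa cb sb /dot /cross; split; ring.
Qed.

Lemma is_angleN a x y : is_angle a x y -> is_angle (- a) y x.
Proof.
case=> l l0 [ca sa]; exists l => //.
by rewrite cos_neg sin_neg ca sa /dot /cross; split; ring.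
Qed.

Lemma is_angle_addPI a x y : is_angle a x y -> is_angle (a + PI) x (vopp y).
Proof.
case=> l l0 [ca sa]; exists l => //.
by rewrite cos_plus sin_plus cos_PI sin_PI ca sa /dot /cross /=; split; ring.
Qed.

(* The normalising factors agree because [cos^2 + sin^2 = 1]; hence [cos (a - b) = 1]. *)
Lemma is_angle_unique a b x y : x <> (0, 0) -> y <> (0, 0) ->
  is_angle a x y -> is_angle b x y -> multiple_2PI (a - b).
Proof.
move=> /sqr_norm_gt0 nx /sqr_norm_gt0 ny [l l0 [ca sa]] [m m0 [cb sb]].
have := sin2_cos2 a; have := sin2_cos2 b.
rewrite /Rsqr ca sa cb sb => Eb Ea.
have P0 : 0 < dot x y * dot x y + cross x y * cross x y.
  by rewrite dot_cross_sqr; apply: Rmult_lt_0_compat.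
have lm : l = m by nra.
apply: cos_eq1_multiple_2PI; rewrite Rminus_def cos_plus cos_neg sin_neg.
by rewrite ca sa cb sb -lm; nra.
Qed.

Lemma small_angle_bound x y : - (PI / 2) < small_angle x y < PI / 2.
Proof. have := atan_bound (cross x y / dot x y); rewrite /small_angle; lra. Qed.

Lemma small_angleC x y : small_angle y x = - small_angle x y.
Proof.
rewrite /small_angle -atan_opp; congr atan.
have -> : dot y x = dot x y by rewrite /dot; ring.
have -> : cross y x = - cross x y by rewrite /cross; ring.
by rewrite Rdiv_opp_l.
Qed.

Lemma small_angle_vopp x y : small_angle (vopp x) (vopp y) = small_angle x y.
Proof. by rewrite /small_angle /dot /cross /=; congr (atan (_ / _)); ring. Qed.

(* Four angles of absolute value below [PI / 2] that close up must sum to [0], not [± 2 PI]. *)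
Lemma small_angle_cycle4 x1 x2 x3 x4 :
  0 < dot x1 x2 -> 0 < dot x2 x3 -> 0 < dot x3 x4 -> 0 < dot x4 x1 ->
  small_angle x1 x2 + small_angle x2 x3 + small_angle x3 x4 + small_angle x4 x1 = 0.
Proof.
move=> d12 d23 d34 d41.
have [n1 n2] := dot_gt0_neq0 d12; have [n3 n4] := dot_gt0_neq0 d34.
have A : is_angle (small_angle x1 x2 + small_angle x2 x3 + small_angle x3 x4
                   + small_angle x4 x1) x1 x1.
  by do 3 apply: is_angleD (is_angle_small _) => //; exact: is_angle_small.
have [k Hk] := is_angle_unique n1 n1 A (is_angle0 n1).
have b12 := small_angle_bound x1 x2; have b23 := small_angle_bound x2 x3.
have b34 := small_angle_bound x3 x4; have b41 := small_angle_bound x4 x1.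
have pi0 := PI_RGT_0; rewrite Rminus_0_r in Hk.
have k0 : -1 < IZR k < 1 by split; apply: (Rmult_lt_reg_l (2 * PI)); nra.
by move: Hk; rewrite (one_IZR_lt1 _ k0) /=; lra.
Qed.

End PlaneAngles.

Section Direction.
Local Open Scope R_scope.

Definition direction (w : point) : R :=
  if Rlt_dec 0 w.1 then small_angle (1, 0) w
  else if Rlt_dec w.1 0 then small_angle (1, 0) (vopp w) + PI
  else if Rlt_dec 0 w.2 then PI / 2 else - (PI / 2).

Lemma is_angle_direction w : w <> (0, 0) -> is_angle (direction w) (1, 0) w.
Proof.
case: w => w1 w2 nw; rewrite /direction /=.
case: Rlt_dec => [w1p|w1n] /=; first by apply: is_angle_small; rewrite /dot /=; lra.
case: Rlt_dec => [w1n'|w1p] /=.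
  have d : 0 < dot (1, 0) (vopp (w1, w2)) by rewrite /dot /=; lra.
  by have := is_angle_addPI (is_angle_small d); rewrite /vopp /= !Ropp_involutive.
have w10 : w1 = 0 by lra.
have w20 : w2 <> 0 by move=> w20; apply: nw; rewrite w10 w20.
case: Rlt_dec => [w2p|w2n] /=; rewrite w10.
  exists (1 / w2); first by apply: Rdiv_lt_0_compat; lra.
  by rewrite cos_PI2 sin_PI2 /dot /cross /=; split; field.
exists (- (1 / w2)); first by rewrite -Rdiv_opp_r; apply: Rdiv_lt_0_compat; lra.
by rewrite cos_neg sin_neg cos_PI2 sin_PI2 /dot /cross /=; split; field.
Qed.

Lemma is_angle_direction_sub t x y : x <> (0, 0) -> y <> (0, 0) ->
  is_angle t x y -> multiple_2PI (t - (direction y - direction x)).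
Proof.
move=> nx ny txy; have e0 : ((1, 0) : point) <> (0, 0) by case; lra.
have dxy : is_angle (- direction x + direction y) x y.
  by apply: (is_angleD e0); [apply/is_angleN | ]; exact: is_angle_direction.
by rewrite (_ : direction y - direction x = - direction x + direction y);
  [exact: is_angle_unique txy dxy | ring].
Qed.

Lemma direction_vopp w : w <> (0, 0) ->
  multiple_2PI (direction (vopp w) - direction w - PI).
Proof.
move=> nw; have nw' : vopp w <> (0, 0).
  by case: w nw => a b nw [a0 b0]; apply: nw; congr pair; lra.
rewrite /Rminus Rplus_assoc -Ropp_plus_distr.
have e0 : ((1, 0) : point) <> (0, 0) by case; lra.
exact: (is_angle_unique e0 nw' (is_angle_direction nw')
                        (is_angle_addPI (is_angle_direction nw))).
Qed.

End Direction.

Section DiscreteWinding.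
Local Open Scope R_scope.

Fixpoint sumR (n : nat) (F : nat -> R) : R :=
  if n is n'.+1 then sumR n' F + F n' else 0.

Lemma eq_sumR n F G : (forall i, (i < n)%N -> F i = G i) -> sumR n F = sumR n G.
Proof.
elim: n => //= n IH FG; rewrite FG // IH // => i lt_in; apply: FG; lia.
Qed.

Lemma dotC x y : dot x y = dot y x.
Proof. rewrite /dot; ring. Qed.

Lemma is_angle_chain (x : nat -> point) n : x 0%N <> (0, 0) ->
  (forall i, (i < n)%N -> 0 < dot (x i) (x i.+1)) ->
  is_angle (sumR n (fun i => small_angle (x i) (x i.+1))) (x 0%N) (x n).
Proof.
move=> x0; elim: n => [_|n IH step] /=; first exact: is_angle0.
have [xn _] := dot_gt0_neq0 (step n (ltnSn n)).
apply: (is_angleD xn); last exact/is_angle_small/step.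
by apply: IH => i lt_in; apply: step; lia.
Qed.

Section Grid.
Variables (v : nat -> nat -> point) (N : nat).
Hypothesis dot_right : forall i j, (i < N)%N -> (j <= N)%N -> 0 < dot (v i j) (v i.+1 j).
Hypothesis dot_up : forall i j, (i <= N)%N -> (j < N)%N -> 0 < dot (v i j) (v i j.+1).

Let row j := sumR N (fun i => small_angle (v i j) (v i.+1 j)).
Let col i := sumR N (fun j => small_angle (v i j) (v i j.+1)).

Lemma row_succ j : (j < N)%N ->
  row j.+1 = row j + small_angle (v N j) (v N j.+1) - small_angle (v 0 j) (v 0 j.+1).
Proof.
move=> ltjN; rewrite /row.
suff S n : (n <= N)%N -> sumR n (fun i => small_angle (v i j.+1) (v i.+1 j.+1)) =
  sumR n (fun i => small_angle (v i j) (v i.+1 j))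
  + small_angle (v n j) (v n j.+1) - small_angle (v 0 j) (v 0 j.+1) by exact: S.
elim: n => [_|n IH ltnN] /=; first ring.
have d1 : 0 < dot (v n j) (v n.+1 j) by apply: dot_right; lia.
have d2 : 0 < dot (v n.+1 j) (v n.+1 j.+1) by apply: dot_up; lia.
have d3 : 0 < dot (v n.+1 j.+1) (v n j.+1) by rewrite dotC; apply: dot_right; lia.
have d4 : 0 < dot (v n j.+1) (v n j) by rewrite dotC; apply: dot_up; lia.
have := small_angle_cycle4 d1 d2 d3 d4.
rewrite (small_angleC (v n j.+1) (v n.+1 j.+1)) (small_angleC (v n j) (v n j.+1)) IH; [lra | lia].
Qed.

Lemma grid_boundary_sum : row N - row 0 - col N + col 0 = 0.
Proof.
suff S j : (j <= N)%N -> row j = row 0 + sumR j (fun k => small_angle (v N k) (v N k.+1))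
                                     - sumR j (fun k => small_angle (v 0 k) (v 0 k.+1)).
  by rewrite S // /col; ring.
elim: j => [_|j IH ltjN] /=; first ring.
by rewrite row_succ ?IH; [ring | lia | lia].
Qed.

End Grid.

End DiscreteWinding.

Section PlanePaths.
Local Open Scope R_scope.

Definition cont01 (g : R -> point) := forall t, 0 <= t <= 1 -> forall eps, 0 < eps ->
  exists2 d, 0 < d & forall s, 0 <= s <= 1 -> Rabs (s - t) < d ->
    Rabs ((g s).1 - (g t).1) < eps /\ Rabs ((g s).2 - (g t).2) < eps.

Lemma in01P t : in01 t <-> 0 <= t <= 1.
Proof. by rewrite /in01; split=> [/andP[/RleP ? /RleP ?] | [/RleP -> /RleP ->]]. Qed.

Lemma path_cont_cont01 g : path_cont g -> cont01 g.
Proof.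
move=> gc t /in01P t01 eps /RltP eps0.
have [d /RltP d0 near_t] := gc t t01 eps eps0; exists d => // s /in01P s01 /RltP st.
by have [/RltP h1 /RltP h2] := near_t s s01 st.
Qed.

Definition clamp01 (t : R) := Rmax 0 (Rmin t 1).

Lemma clamp01_in t : 0 <= clamp01 t <= 1.
Proof. rewrite /clamp01 /Rmax /Rmin; do 2 case: Rle_dec; lra. Qed.

Lemma clamp01_id t : 0 <= t <= 1 -> clamp01 t = t.
Proof. rewrite /clamp01 /Rmax /Rmin; do 2 case: Rle_dec; lra. Qed.

Lemma clamp01_lipschitz s t : Rabs (clamp01 s - clamp01 t) <= Rabs (s - t).
Proof.
rewrite /clamp01 /Rmax /Rmin /Rabs.
by repeat destruct Rle_dec; repeat destruct Rcase_abs; lra.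
Qed.

Definition dist_inf (x y : point) := Rmax (Rabs (x.1 - y.1)) (Rabs (x.2 - y.2)).

(* Composing with [clamp01] extends [g] continuously to all of [R], as Stdlib's
   compactness results require. *)
Lemma cont01_clamp g : cont01 g -> forall x eps, 0 < eps -> exists2 d, 0 < d &
  forall y, Rabs (y - x) < d -> dist_inf (g (clamp01 y)) (g (clamp01 x)) < eps.
Proof.
move=> gc x eps eps0; have [d d0 near] := gc _ (clamp01_in x) eps eps0.
exists d => // y yx.
have [h1 h2] := near _ (clamp01_in y) (Rle_lt_trans _ _ _ (clamp01_lipschitz y x) yx).
exact: Rmax_lub_lt.
Qed.

Lemma continuity_pt_eps (h : R -> R) x :
  (forall eps, 0 < eps -> exists2 d, 0 < d &
     forall y, Rabs (y - x) < d -> Rabs (h y - h x) < eps) ->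
  continuity_pt h x.
Proof.
move=> H eps eps0; have [d d0 near] := H eps eps0.
by exists d; split=> // y [_ yx]; apply: near.
Qed.

Lemma cont01_uniform g : cont01 g -> forall eps, 0 < eps -> exists2 d, 0 < d &
  forall s s', 0 <= s <= 1 -> 0 <= s' <= 1 -> Rabs (s - s') < d ->
    Rabs ((g s).1 - (g s').1) < eps /\ Rabs ((g s).2 - (g s').2) < eps.
Proof.
move=> gc eps eps0.
have c1 x : continuity_pt (fun y => (g (clamp01 y)).1) x.
  apply: continuity_pt_eps => e e0; have [d d0 near] := cont01_clamp gc x e0.
  by exists d => // y /near; apply: Rle_lt_trans (Rmax_l _ _).
have c2 x : continuity_pt (fun y => (g (clamp01 y)).2) x.
  apply: continuity_pt_eps => e e0; have [d d0 near] := cont01_clamp gc x e0.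
  by exists d => // y /near; apply: Rle_lt_trans (Rmax_r _ _).
have [d1 H1] := Heine _ _ (compact_P3 0 1) (fun x _ => c1 x) (mkposreal eps eps0).
have [d2 H2] := Heine _ _ (compact_P3 0 1) (fun x _ => c2 x) (mkposreal eps eps0).
exists (Rmin d1 d2); first by apply: Rmin_pos; apply: cond_pos.
move=> s s' s01 s'01 ss'; rewrite -(clamp01_id s01) -(clamp01_id s'01); split.
- by apply: (H1 s s') => //; exact: Rlt_le_trans ss' (Rmin_l _ _).
- by apply: (H2 s s') => //; exact: Rlt_le_trans ss' (Rmin_r _ _).
Qed.

Definition disjoint_paths (e f : R -> point) :=
  forall s t, 0 <= s <= 1 -> 0 <= t <= 1 -> e s <> f t.

Lemma dist_infC x y : dist_inf x y = dist_inf y x.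
Proof. by rewrite /dist_inf (Rabs_minus_sym x.1) (Rabs_minus_sym x.2). Qed.

Lemma dist_inf_triangle x y z : dist_inf x z <= dist_inf x y + dist_inf y z.
Proof.
have T a b c : Rabs (a - c) <= Rabs (a - b) + Rabs (b - c).
  by rewrite (_ : a - c = (a - b) + (b - c)); [exact: Rabs_triang | ring].
rewrite /dist_inf; apply: Rmax_lub; apply: Rle_trans (T _ _ _) _;
  apply: Rplus_le_compat; (apply: Rmax_l || apply: Rmax_r).
Qed.

Lemma dist_inf_gt0 x y : x <> y -> 0 < dist_inf x y.
Proof.
case: x y => [x1 x2] [y1 y2] /= xy; rewrite /dist_inf /=.
have [e1|n1] := Req_dec x1 y1; last by apply: Rlt_le_trans (Rmax_l _ _); apply: Rabs_pos_lt; lra.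
have [e2|n2] := Req_dec x2 y2; last by apply: Rlt_le_trans (Rmax_r _ _); apply: Rabs_pos_lt; lra.
by case: xy; rewrite e1 e2.
Qed.

Lemma continuity_pt_dist_lipschitz (F : R -> R) (h : R -> point) x :
  (forall y z, F y <= F z + dist_inf (h y) (h z)) ->
  (forall eps, 0 < eps -> exists2 d, 0 < d &
     forall y, Rabs (y - x) < d -> dist_inf (h y) (h x) < eps) ->
  continuity_pt F x.
Proof.
move=> lipF hc; apply: continuity_pt_eps => eps eps0.
have [d d0 near] := hc eps eps0; exists d => // y /near hyx.
have := lipF y x; have := lipF x y; rewrite dist_infC /Rabs; case: Rcase_abs; lra.
Qed.

Lemma disjoint_paths_sep e f : cont01 e -> cont01 f ->
  disjoint_paths e f ->
  exists2 m, 0 < m & forall s t, 0 <= s <= 1 -> 0 <= t <= 1 -> m <= dist_inf (e s) (f t).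
Proof.
move=> ec fc ef.
pose D s t := dist_inf (e (clamp01 s)) (f (clamp01 t)).
have nearest s : exists t, (forall c, 0 <= c <= 1 -> D s t <= D s c) /\ 0 <= t <= 1.
  apply: continuity_ab_min => [|c _]; first lra.
  apply: (continuity_pt_dist_lipschitz (h := fun t => f (clamp01 t))).
    by move=> y z; rewrite /D (dist_infC (f (clamp01 y))); exact: dist_inf_triangle.
  exact: cont01_clamp.
have [T HT] := functional_choice _ nearest.
pose M s := D s (T s).
have [smin [Mmin smin01]] : exists smin, (forall c, 0 <= c <= 1 -> M smin <= M c) /\ 0 <= smin <= 1.
  apply: continuity_ab_min => [|c _]; first lra.
  apply: (continuity_pt_dist_lipschitz (h := fun s => e (clamp01 s))); last first.
    exact: cont01_clamp.
  move=> y z; have [Ty _] := HT y.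
  have := Ty (T z) (proj2 (HT z)); rewrite /M /D.
  have := dist_inf_triangle (e (clamp01 y)) (e (clamp01 z)) (f (clamp01 (T z))); lra.
exists (M smin); first by apply: dist_inf_gt0; apply: ef; exact: clamp01_in.
move=> s t s01 t01; apply: Rle_trans (Mmin s s01) _.
by have [+ _] := HT s => /(_ t t01); rewrite /M /D (clamp01_id s01) (clamp01_id t01).
Qed.

Lemma dot_gt0_close x y m : 0 < m -> m <= Rmax (Rabs x.1) (Rabs x.2) ->
  Rabs (x.1 - y.1) < m / 2 -> Rabs (x.2 - y.2) < m / 2 -> 0 < dot x y.
Proof.
rewrite /dot /Rmax; case: Rle_dec => _; rewrite /Rabs;
  by repeat destruct Rcase_abs; nra.
Qed.

Lemma disjoint_paths_dot_gt0 e f : cont01 e -> cont01 f ->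
  disjoint_paths e f ->
  exists2 d, 0 < d & forall s s' t t', 0 <= s <= 1 -> 0 <= s' <= 1 -> 0 <= t <= 1 ->
    0 <= t' <= 1 -> Rabs (s - s') < d -> Rabs (t - t') < d ->
    0 < dot (vsub (e s) (f t)) (vsub (e s') (f t')).
Proof.
move=> ec fc ef; have [m m0 sep] := disjoint_paths_sep ec fc ef.
have m4 : 0 < m / 4 by lra.
have [d1 d10 ue] := cont01_uniform ec m4.
have [d2 d20 uf] := cont01_uniform fc m4.
exists (Rmin d1 d2); first exact: Rmin_pos.
move=> s s' t t' s01 s'01 t01 t'01 ss' tt'.
have [e1 e2] := ue s s' s01 s'01 (Rlt_le_trans _ _ _ ss' (Rmin_l _ _)).
have [f1 f2] := uf t t' t01 t'01 (Rlt_le_trans _ _ _ tt' (Rmin_r _ _)).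
have close a b c d : Rabs (a - b) < m / 4 -> Rabs (c - d) < m / 4 ->
    Rabs (a - c - (b - d)) < m / 2.
  by rewrite /Rabs; repeat destruct Rcase_abs; lra.
by apply: (dot_gt0_close m0); [exact: sep | apply: close | apply: close].
Qed.

End PlanePaths.

Section Winding.
Local Open Scope R_scope.

Definition winding (N : nat) (g : R -> point) (p : point) : R :=
  sumR N (fun i => small_angle (vsub (g (INR i / INR N)) p) (vsub (g (INR i.+1 / INR N)) p)).

Lemma vsub_neq0 x y : x <> y -> vsub x y <> (0, 0).
Proof. by case: x y => [x1 x2] [y1 y2] xy [e1 e2]; apply: xy; congr pair; lra. Qed.

Lemma vsub_vopp x y : vopp (vsub x y) = vsub y x.
Proof. by rewrite /vopp /vsub /=; congr pair; ring. Qed.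

Lemma small_angle_vsub_flip a b p :
  small_angle (vsub p a) (vsub p b) = small_angle (vsub a p) (vsub b p).
Proof. by rewrite -small_angle_vopp !vsub_vopp. Qed.

Lemma dot_vsub_flip a b p : dot (vsub a p) (vsub b p) = dot (vsub p a) (vsub p b).
Proof. rewrite /dot /vsub /=; ring. Qed.

Lemma grid_in01 i N : (0 < N)%N -> (i <= N)%N -> 0 <= INR i / INR N <= 1.
Proof.
move=> /ltP N0 /leP iN; have := lt_0_INR _ N0; have := le_INR _ _ iN; have := pos_INR i.
move=> i0 iN' N0'; split; first by apply: Rmult_le_pos; [lra | apply/Rlt_le/Rinv_0_lt_compat].
by apply: (Rmult_le_reg_r (INR N)) => //; rewrite /Rdiv Rmult_assoc Rinv_l; lra.
Qed.

Lemma grid_step i N : (0 < N)%N -> Rabs (INR i / INR N - INR i.+1 / INR N) = / INR N.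
Proof.
move=> /ltP /lt_0_INR N0; rewrite S_INR (_ : _ - _ = - / INR N); last by field; lra.
by rewrite Rabs_Ropp Rabs_right //; apply/Rle_ge/Rlt_le/Rinv_0_lt_compat.
Qed.

Lemma is_angle_winding N g p : (0 < N)%N -> g 0 <> p ->
  (forall i, (i < N)%N ->
     0 < dot (vsub (g (INR i / INR N)) p) (vsub (g (INR i.+1 / INR N)) p)) ->
  is_angle (winding N g p) (vsub (g 0) p) (vsub (g 1) p).
Proof.
move=> /[dup] N0 /ltP /lt_0_INR N0' g0p step.
have := is_angle_chain (x := fun i => vsub (g (INR i / INR N)) p) (n := N).
rewrite /= Rdiv_0_l Rdiv_diag; last lra.
by apply; [exact: vsub_neq0 | exact: step].
Qed.

(* The grid [v i j = e (i / N) - f (j / N)] has small steps, so its boundary sum vanishes;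
   the four sides of the boundary are the four windings below. *)
Lemma disjoint_paths_winding e f : cont01 e -> cont01 f ->
  disjoint_paths e f ->
  exists N0, forall N, (N0 <= N)%N -> [/\
    winding N e (f 1) - winding N e (f 0) - winding N f (e 1) + winding N f (e 0) = 0,
    forall t, 0 <= t <= 1 -> is_angle (winding N e (f t)) (vsub (e 0) (f t)) (vsub (e 1) (f t)) &
    forall s, 0 <= s <= 1 -> is_angle (winding N f (e s)) (vsub (f 0) (e s)) (vsub (f 1) (e s))].
Proof.
move=> ec fc ef; have [d d0 small] := disjoint_paths_dot_gt0 ec fc ef.
have [N0 [N0d N00]] := archimed_cor1 d d0.
exists N0 => N /leP N0N; have N0' : (0 < N)%N by apply/ltP; lia.
have Nd : / INR N < d.
  apply: Rle_lt_trans N0d; apply: Rinv_le_contravar; first exact: lt_0_INR.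
  exact: le_INR.
have step i : Rabs (INR i / INR N - INR i.+1 / INR N) < d by rewrite grid_step.
have still x : Rabs (x - x) < d by rewrite Rminus_diag Rabs_R0.
have in01 i : (i <= N)%N -> 0 <= INR i / INR N <= 1 by exact: grid_in01.
have I0 : 0 <= 0 <= 1 by lra.
have I1 : 0 <= 1 <= 1 by lra.
pose v i j := vsub (e (INR i / INR N)) (f (INR j / INR N)).
have right i j : (i < N)%N -> (j <= N)%N -> 0 < dot (v i j) (v i.+1 j).
  by move=> iN jN; apply: small => //; apply: in01; lia.
have up i j : (i <= N)%N -> (j < N)%N -> 0 < dot (v i j) (v i j.+1).
  by move=> iN jN; apply: small => //; apply: in01; lia.
have col_flip i :
    sumR N (fun j => small_angle (v i j) (v i j.+1)) = winding N f (e (INR i / INR N)).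
  by apply: eq_sumR => j _; rewrite /v -small_angle_vsub_flip.
have row_winding j : sumR N (fun i => small_angle (v i j) (v i.+1 j)) =
    winding N e (f (INR j / INR N)) by [].
have N1 : INR N / INR N = 1 by apply: Rdiv_diag; apply: not_0_INR; lia.
have := grid_boundary_sum right up; rewrite /= !col_flip !row_winding N1 Rdiv_0_l.
move=> boundary; split=> // [t t01 | s s01]; apply: is_angle_winding => //.
- exact: ef.
- by move=> i iN; apply: small => //; apply: in01; lia.
- by move=> fe; apply: (ef s 0) => //.
- by move=> i iN; rewrite dot_vsub_flip; apply: small => //; apply: in01; lia.
Qed.

End Winding.

Section Defects.
Local Open Scope R_scope.

Definition turns (x : R) : Z := Z.sub (up (x / (2 * PI))) 1.

Lemma turnsK x : multiple_2PI x -> x = 2 * PI * IZR (turns x).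
Proof.
case=> k ->; have := PI_RGT_0 => pi0.
rewrite /turns (_ : 2 * PI * IZR k / (2 * PI) = IZR k); last by field; lra.
by rewrite -(tech_up (IZR k) (Z.add k 1)) ?Z.add_simpl_r // plus_IZR; lra.
Qed.

(* The whole numbers of turns by which the winding of [g] around [p], and the half turn
   from [y - x] to [x - y], differ from the values predicted by [direction]. *)
Definition winding_defect N g p : Z :=
  turns (winding N g p - (direction (vsub (g 1) p) - direction (vsub (g 0) p))).

Definition reversal_defect (x y : point) : Z :=
  turns (direction (vsub x y) - direction (vsub y x) - PI).

Lemma multiple_2PI_reversal x y : x <> y ->
  multiple_2PI (direction (vsub x y) - direction (vsub y x) - PI).
Proof.
by move=> xy; have := direction_vopp (vsub_neq0 (nesym xy)); rewrite vsub_vopp.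
Qed.

Lemma reversal_defectC_R x y : x <> y ->
  IZR (reversal_defect y x) = - IZR (reversal_defect x y) - 1.
Proof.
move=> xy; have := PI_RGT_0 => pi0.
have := turnsK (multiple_2PI_reversal xy); have := turnsK (multiple_2PI_reversal (nesym xy)).
rewrite /reversal_defect => Eyx Exy; apply: (Rmult_eq_reg_l (2 * PI)); lra.
Qed.

Definition path_joining (g : R -> point) (a b : point) := [/\ cont01 g, g 0 = a & g 1 = b].

Lemma disjoint_paths_ends e f a0 a1 b0 b1 :
  path_joining e a0 a1 -> path_joining f b0 b1 -> disjoint_paths e f -> a1 <> b1.
Proof. by move=> [_ _ <-] [_ _ <-] ef; apply: ef; lra. Qed.

Lemma disjoint_paths_defects_R e f a0 a1 b0 b1 :
  path_joining e a0 a1 -> path_joining f b0 b1 -> disjoint_paths e f ->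
  exists N0, forall N, (N0 <= N)%N ->
    IZR (winding_defect N e b1) - IZR (winding_defect N e b0)
    - IZR (winding_defect N f a1) + IZR (winding_defect N f a0)
    + IZR (reversal_defect a1 b1) + IZR (reversal_defect a0 b0)
    - IZR (reversal_defect a0 b1) - IZR (reversal_defect a1 b0) = 0.
Proof.
move=> [ec <- <-] [fc <- <-] ef; have [N0 HN0] := disjoint_paths_winding ec fc ef.
exists N0 => N /HN0[boundary We Wf].
have I0 : 0 <= 0 <= 1 by lra.
have I1 : 0 <= 1 <= 1 by lra.
have turns_e t : 0 <= t <= 1 -> winding N e (f t) - (direction (vsub (e 1) (f t))
    - direction (vsub (e 0) (f t))) = 2 * PI * IZR (winding_defect N e (f t)).
  move=> t01; apply/turnsK/is_angle_direction_sub/We => //; exact/vsub_neq0/ef.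
have turns_f s : 0 <= s <= 1 -> winding N f (e s) - (direction (vsub (f 1) (e s))
    - direction (vsub (f 0) (e s))) = 2 * PI * IZR (winding_defect N f (e s)).
  move=> s01; apply/turnsK/is_angle_direction_sub/Wf => //;
    by apply: vsub_neq0 => fe; apply: (ef s _ s01 _ (esym fe)).
have turns_r s t : 0 <= s <= 1 -> 0 <= t <= 1 -> direction (vsub (e s) (f t))
    - direction (vsub (f t) (e s)) - PI = 2 * PI * IZR (reversal_defect (e s) (f t)).
  by move=> s01 t01; apply/turnsK/multiple_2PI_reversal/ef.
have := turns_e _ I0; have := turns_e _ I1; have := turns_f _ I0; have := turns_f _ I1.
have := turns_r _ _ I0 I0; have := turns_r _ _ I0 I1; have := turns_r _ _ I1 I0.
have := turns_r _ _ I1 I1; have := PI_RGT_0 => *.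
apply: (Rmult_eq_reg_l (2 * PI)); lra.
Qed.

End Defects.

Lemma eventually_forall_lt (P : nat -> nat -> Prop) n :
  (forall i, (i < n)%N -> exists N0, forall N, (N0 <= N)%N -> P i N) ->
  exists N0, forall N, (N0 <= N)%N -> forall i, (i < n)%N -> P i N.
Proof.
elim: n => [_|n IH ev]; first by exists 0%N.
have [N1 H1] := IH (fun i lt_in => ev i (ltnW lt_in)).
have [N2 H2] := ev n (ltnSn n).
exists (maxn N1 N2) => N; rewrite geq_max => /andP[N1N N2N] i.
by rewrite ltnS leq_eqVlt => /orP[/eqP-> | lt_in]; [exact: H2 | exact: H1].
Qed.

Section IntegerRelation.
Local Open Scope Z_scope.

Lemma reversal_defectC x y : x <> y -> reversal_defect y x = - reversal_defect x y - 1.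
Proof.
move=> /reversal_defectC_R; move: (reversal_defect y x) (reversal_defect x y) => *.
by apply: eq_IZR; rewrite minus_IZR opp_IZR.
Qed.

Lemma disjoint_paths_defects e f a0 a1 b0 b1 :
  path_joining e a0 a1 -> path_joining f b0 b1 -> disjoint_paths e f ->
  exists N0, forall N, (N0 <= N)%N ->
    winding_defect N e b1 - winding_defect N e b0 - winding_defect N f a1 + winding_defect N f a0
    + reversal_defect a1 b1 + reversal_defect a0 b0
    - reversal_defect a0 b1 - reversal_defect a1 b0 = 0.
Proof.
move=> e01 f01 ef; have [N0 HN0] := disjoint_paths_defects_R e01 f01 ef.
exists N0 => N /HN0; move: (winding_defect N e b1) (winding_defect N e b0)
  (winding_defect N f a1) (winding_defect N f a0) (reversal_defect a1 b1)
  (reversal_defect a0 b0) (reversal_defect a0 b1) (reversal_defect a1 b0) => *.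
by apply: eq_IZR; rewrite !(minus_IZR, plus_IZR).
Qed.

(* In the sum of the 18 relations with [i < k], every [nA], [nB], [mAA], [mAB] and [mBA]
   term has an even coefficient, while by antisymmetry the [mBB] terms add up to [3 * (-3)]. *)
Lemma K33_parity (nA nB : nat -> nat -> nat -> Z) (mAA mBB mAB mBA : nat -> nat -> Z) :
  (forall j l, (j < 3)%N -> (l < 3)%N -> j <> l -> mBB l j = - mBB j l - 1) ->
  (forall i j k l, (i < k < 3)%N -> (j < 3)%N -> (l < 3)%N -> j <> l ->
     nB i j l - nA i j k - nB k l j + nA k l i + mBB j l + mAA i k - mAB i l - mBA j k = 0) ->
  False.
Proof.
move=> anti rel.
have := (anti 0 1)%N; have := (anti 0 2)%N; have := (anti 1 2)%N.
have := (rel 0 0 1 1)%N; have := (rel 0 0 1 2)%N; have := (rel 0 1 1 0)%N; have := (rel 0 1 1 2)%N.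
have := (rel 0 2 1 0)%N; have := (rel 0 2 1 1)%N; have := (rel 0 0 2 1)%N; have := (rel 0 0 2 2)%N.
have := (rel 0 1 2 0)%N; have := (rel 0 1 2 2)%N; have := (rel 0 2 2 0)%N; have := (rel 0 2 2 1)%N.
have := (rel 1 0 2 1)%N; have := (rel 1 0 2 2)%N; have := (rel 1 1 2 0)%N; have := (rel 1 1 2 2)%N.
have := (rel 1 2 2 0)%N; have := (rel 1 2 2 1)%N.
lia.
Qed.

Lemma K33_paths_meet (A B : nat -> point) (g : nat -> nat -> R -> point) :
  (forall i j, (i < 3)%N -> (j < 3)%N -> path_joining (g i j) (A i) (B j)) ->
  (forall i j k l, (i < 3)%N -> (j < 3)%N -> (k < 3)%N -> (l < 3)%N -> i <> k -> j <> l ->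
     disjoint_paths (g i j) (g k l)) ->
  False.
Proof.
move=> join disj.
have [N HN] : exists N0, forall N, (N0 <= N)%N ->
    forall i, (i < 3)%N -> forall j, (j < 3)%N -> forall k, (k < 3)%N -> forall l, (l < 3)%N ->
    (i < k)%N -> j <> l ->
    winding_defect N (g i j) (B l) - winding_defect N (g i j) (A k)
    - winding_defect N (g k l) (B j) + winding_defect N (g k l) (A i)
    + reversal_defect (B j) (B l) + reversal_defect (A i) (A k)
    - reversal_defect (A i) (B l) - reversal_defect (B j) (A k) = 0.
  apply: eventually_forall_lt => i i3; apply: eventually_forall_lt => j j3.
  apply: eventually_forall_lt => k k3; apply: eventually_forall_lt => l l3.
  have [ik|] := boolP (i < k)%N; last by exists 0%N => N _ /negP.
  have [<-|jl] := eqVneq j l; first by exists 0%N.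
  have [|N0 HN0] := disjoint_paths_defects (join i j i3 j3) (join k l k3 l3).
    by apply: disj => //; [move=> ki; rewrite ki ltnn in ik | apply/eqP].
  by exists N0 => N /HN0.
apply: (K33_parity (nA := fun i j k => winding_defect N (g i j) (A k))
                   (nB := fun i j l => winding_defect N (g i j) (B l))
                   (mBB := fun j l => reversal_defect (B j) (B l))) => [j l j3 l3 jl|].
  apply: reversal_defectC; apply: (disjoint_paths_ends (join 0%N j _ j3) (join 1%N l _ l3)) => //.
  exact: disj.
move=> i j k l /andP[ik k3] j3 l3 jl; apply: HN => //; exact: ltn_trans k3.
Qed.

End IntegerRelation.

Lemma K33_not_planar (T : finType) (V : {set T}) (e : rel T) (a b : nat -> T) :
  (forall i k, (i < 3)%N -> (k < 3)%N -> a i = a k -> i = k) ->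
  (forall j l, (j < 3)%N -> (l < 3)%N -> b j = b l -> j = l) ->
  (forall i j, (i < 3)%N -> (j < 3)%N -> a i <> b j) ->
  (forall i j, (i < 3)%N -> (j < 3)%N -> e (a i) (b j)) ->
  ~ planar V e.
Proof.
move=> ainj binj ab edge [pos [arc [_ [arcP cross]]]].
apply: (K33_paths_meet (A := pos \o a) (B := pos \o b) (g := fun i j => arc (a i) (b j))).
  move=> i j i3 j3; have [c a0 a1 _ _] := arcP _ _ (edge i j i3 j3).
  by split=> //; exact: path_cont_cont01.
move=> i j k l i3 j3 k3 l3 ik jl s t /in01P s01 /in01P t01 meet.
have [|w [[->|->] [Ew|Ew]] _] :=
  cross _ _ _ _ (edge i j i3 j3) (edge k l k3 l3) _ s t s01 t01 meet.
- by case=> [] [E _]; [exact: ik (ainj _ _ i3 k3 E) | exact: ab i3 l3 E].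
- exact: ik (ainj _ _ i3 k3 Ew).
- exact: ab i3 l3 Ew.
- exact: ab k3 j3 (esym Ew).
- exact: jl (binj _ _ j3 l3 Ew).
Qed.

Section LocalRing.
Local Open Scope ring_scope.
Variables (S : finComNzRingType) (J : {set S}).

Definition nonunit (x : S) := ~~ [exists y, x * y == 1].

Lemma nonunitM s x : nonunit x -> nonunit (s * x).
Proof.
apply: contra => /existsP[y /eqP sxy]; apply/existsP; exists (s * y).
by rewrite mulrCA mulrA sxy.
Qed.

Lemma nonunit1 : ~~ nonunit 1.
Proof. by rewrite negbK; apply/existsP; exists 1; rewrite mulr1. Qed.

Lemma mem_xSJ0 z : z \in xSJ J 0 -> z \in J.
Proof. by rewrite inE => /existsP[s /existsP[j /andP[Jj /eqP->]]]; rewrite mul0r add0r. Qed.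

Lemma mem_xSJ_self x : 0 \in J -> x \in xSJ J x.
Proof.
move=> J0; rewrite inE; apply/existsP; exists 1; apply/existsP; exists 0.
by rewrite J0 mulr1 addr0 eqxx.
Qed.

Hypothesis local : local_ring S.

Lemma nonunitD x y : nonunit x -> nonunit y -> nonunit (x + y).
Proof.
move=> nx ny; have [_ [subN _]] := local.
have Nx : x \in [set x | nonunit x] by rewrite inE.
have Ny : - y \in [set x | nonunit x] by rewrite inE -mulN1r; exact: nonunitM.
by have := subN _ _ Nx Ny; rewrite opprK inE.
Qed.

Lemma unit_add1 x : nonunit x -> ~~ nonunit (1 + x).
Proof.
move=> nx; apply: contra nonunit1 => n1x.
by rewrite -(addrK x 1) addrC; apply: nonunitD => //; rewrite -mulN1r; apply: nonunitM.
Qed.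

Hypothesis proper : proper_ideal_of J.

Lemma ideal_nonunit j : j \in J -> nonunit j.
Proof.
case: proper => [[_ [_ mulJ]] JT] Jj; apply: contraNN JT => /existsP[y /eqP jy].
by apply/eqP/setP => s; rewrite inE -(mulr1 s) -jy (mulrC j) mulrA mulJ.
Qed.

Lemma unit_notin_ideal u : ~~ nonunit u -> u \notin J.
Proof. by apply: contra; exact: ideal_nonunit. Qed.

Lemma mem_xSJ_nonunit x z : nonunit x -> z \in xSJ J x -> nonunit z.
Proof.
move=> nx; rewrite inE => /existsP[s /existsP[j /andP[Jj /eqP->]]].
by apply: nonunitD; [rewrite mulrC; apply: nonunitM | exact: ideal_nonunit].
Qed.

Lemma G2_vertices_nonunit x : x \in G2_vertices J -> nonunit x.
Proof.
rewrite inE => /andP[_]; apply: contraR; rewrite negbK => /existsP[y /eqP xy].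
apply/eqP/setP => z; rewrite !inE; apply/existsP; exists (y * z); apply/existsP; exists 0.
by case: proper => [[-> _] _]; rewrite mulrA xy mul1r addr0 eqxx.
Qed.

Lemma G2_vertices_neq0 x : x \in G2_vertices J -> x != 0.
Proof.
by rewrite inE => /andP[xJ _]; apply: contraNneq xJ => ->; case: proper => [[]].
Qed.

(* [0] together with two distinct vertices of [Gamma''_J(S)]. *)
Lemma three_nonunits : (1 < #|G2_vertices J|)%N ->
  exists x : nat -> S, (forall i, (i < 3)%N -> nonunit (x i)) /\
    (forall i k, (i < 3)%N -> (k < 3)%N -> x i = x k -> i = k).
Proof.
case/card_gt1P=> v [v' [Vv Vv' vv']].
have J0 : 0 \in J by case: proper => [[]].
exists (nth 0 [:: 0; v; v']); split=> [[|[|[|i]]] //= _ | i k i3 k3 /eqP].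
- exact: ideal_nonunit.
- exact: G2_vertices_nonunit.
- exact: G2_vertices_nonunit.
rewrite nth_uniq //= => [/eqP //|].
by rewrite !inE negb_or !(eq_sym 0) vv' !G2_vertices_neq0.
Qed.

End LocalRing.

Section ProductRing.
Local Open Scope ring_scope.
Variables (R1 R2 : finComNzRingType) (I1 : {set R1}) (I2 : {set R2}).
Let I := setX I1 I2.

Lemma mem_xSJ_setX (x z : R1 * R2) :
  z \in xSJ I x -> z.1 \in xSJ I1 x.1 /\ z.2 \in xSJ I2 x.2.
Proof.
rewrite inE => /existsP[s /existsP[[j1 j2] /andP[]]]; rewrite in_setX => /andP[J1 J2] /eqP->.
by split; rewrite inE; apply/existsP; [exists s.1 | exists s.2]; apply/existsP;
  [exists j1 | exists j2]; rewrite ?J1 ?J2 eqxx.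
Qed.

Hypotheses (local1 : local_ring R1) (local2 : local_ring R2).
Hypotheses (proper1 : proper_ideal_of I1) (proper2 : proper_ideal_of I2).

Lemma G2_vertices_setX x : (x.1 \notin I1) || (x.2 \notin I2) ->
  nonunit x.1 || nonunit x.2 -> x \in G2_vertices I.
Proof.
move=> xI nx; rewrite inE; apply/andP; split.
  by case: x xI {nx} => ? ?; rewrite in_setX negb_and.
apply: contraTneq nx => xST.
have /mem_xSJ_setX[/= x1 x2] : (1, 1) \in xSJ I x by rewrite xST inE.
rewrite negb_or; apply/andP; split; apply: (contraNN _ (nonunit1 _)) => n.
- exact: mem_xSJ_nonunit local1 proper1 _ _ n x1.
- exact: mem_xSJ_nonunit local2 proper2 _ _ n x2.
Qed.

Lemma G2_adj_setX x y : x \in G2_vertices I -> y \in G2_vertices I ->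
  (x.1 \notin xSJ I1 y.1) || (x.2 \notin xSJ I2 y.2) ->
  (y.1 \notin xSJ I1 x.1) || (y.2 \notin xSJ I2 x.2) -> G2_adj I x y.
Proof.
have notin_xSJ u v : (u.1 \notin xSJ I1 v.1) || (u.2 \notin xSJ I2 v.2) -> u \notin xSJ I v.
  by apply: contraTN => /mem_xSJ_setX[-> ->].
move=> Vx Vy /notin_xSJ xy /notin_xSJ yx; rewrite /G2_adj Vx Vy xy yx !andbT /=.
apply: contraNneq xy => ->; apply: mem_xSJ_self.
by rewrite in_setX; case: proper1 => [[-> _] _]; case: proper2 => [[-> _] _].
Qed.

Lemma G2_setX_not_planar_left (x : nat -> R1) :
  (forall i, (i < 3)%N -> nonunit (x i)) ->
  (forall i k, (i < 3)%N -> (k < 3)%N -> x i = x k -> i = k) ->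
  ~ planar (G2_vertices I) (G2_adj I).
Proof.
move=> nx xinj; have I20 : 0 \in I2 by case: proper2 => [[]].
apply: (K33_not_planar (a := fun i => (x i, 1)) (b := fun j => (1 + x j, 0))).
- by move=> i k i3 k3 [/xinj]; apply.
- by move=> j l j3 l3 [/addrI /xinj]; apply.
- by move=> i j _ _ [_ /eqP]; rewrite oner_eq0.
have one_notin_I2 := unit_notin_ideal proper2 (nonunit1 R2).
move=> i j i3 j3; have ux := unit_add1 local1 (nx j j3).
apply: G2_adj_setX => /=.
- by apply: G2_vertices_setX; rewrite /= ?one_notin_I2 ?nx ?orbT.
- apply: G2_vertices_setX; rewrite /= ?(ideal_nonunit proper2 I20) ?orbT //.
  by rewrite (unit_notin_ideal proper1 ux).
- by apply/orP; right; exact: contra (@mem_xSJ0 _ _ 1) one_notin_I2.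
- by apply/orP; left; exact: contra (mem_xSJ_nonunit local1 proper1 (nx i i3)) ux.
Qed.

Lemma G2_setX_not_planar_right (x : nat -> R2) :
  (forall i, (i < 3)%N -> nonunit (x i)) ->
  (forall i k, (i < 3)%N -> (k < 3)%N -> x i = x k -> i = k) ->
  ~ planar (G2_vertices I) (G2_adj I).
Proof.
move=> nx xinj; have I10 : 0 \in I1 by case: proper1 => [[]].
apply: (K33_not_planar (a := fun i => (1, x i)) (b := fun j => (0, 1 + x j))).
- by move=> i k i3 k3 [/xinj]; apply.
- by move=> j l j3 l3 [/addrI /xinj]; apply.
- by move=> i j _ _ [/eqP]; rewrite oner_eq0.
have one_notin_I1 := unit_notin_ideal proper1 (nonunit1 R1).
move=> i j i3 j3; have ux := unit_add1 local2 (nx j j3).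
apply: G2_adj_setX => /=.
- by apply: G2_vertices_setX; rewrite /= ?one_notin_I1 ?nx ?orbT.
- apply: G2_vertices_setX; rewrite /= ?(ideal_nonunit proper1 I10) //.
  by rewrite (unit_notin_ideal proper2 ux) orbT.
- by apply/orP; left; exact: contra (@mem_xSJ0 _ _ 1) one_notin_I1.
- by apply/orP; right; exact: contra (mem_xSJ_nonunit local2 proper2 (nx i i3)) ux.
Qed.

End ProductRing.

Theorem lemma3p8 (R1 R2 : finComNzRingType) (I1 : {set R1}) (I2 : {set R2}) :
  local_ring R1 -> local_ring R2 ->
  proper_ideal_of I1 -> proper_ideal_of I2 ->
  (1 < #|G2_vertices I1|)%N \/ (1 < #|G2_vertices I2|)%N ->
  ~ planar (G2_vertices (setX I1 I2 : {set (R1 * R2)%type}))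
           (G2_adj (setX I1 I2 : {set (R1 * R2)%type})).
Proof.
move=> local1 local2 proper1 proper2 [].
- case/(three_nonunits proper1)=> x [nx xinj].
  exact: (G2_setX_not_planar_left local1 local2 proper1 proper2 nx xinj).
- case/(three_nonunits proper2)=> x [nx xinj].
  exact: (G2_setX_not_planar_right local1 local2 proper1 proper2 nx xinj).
Qed.
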